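(* (General exclusion rule for composite spin.) Consider a two-particle state of two particles with the same spin $s$, with total spin $S$ and total third component $M$, formed in a common canonical spin quantization frame as $$|S,M:(Q_a,\mathbf{p}_a,s)^1;(Q_b,\mathbf{p}_b,s)^2\rangle^C=\sum_{m_a,m_b}C^{ssS}_{m_a m_b M}\,|(Q_a,\mathbf{p}_a,s,m_a)^1;(Q_b,\mathbf{p}_b,s,m_b)^2\rangle^C .$$ Suppose all other quantum numbers of the two particles are identical: $\mathbf{p}_a=\mathbf{p}_b$ and $Q_a=Q_b$. Then the state vector vanishes whenever $S$ is odd. Hence only states of even total spin $S$ are allowed, for bosons and fermions alike. For $s=1/2$ this is the Pauli exclusion principle.
   Context: $C^{ssS}_{m_a m_b M}$ are the Clebsch–Gordan coefficients for coupling two spins $s$ to total spin $S$. They satisfy $C^{ssS}_{m_am_bM}=(-1)^{S-2s}C^{ssS}_{m_bm_aM}$. $|(Q_a,\mathbf{p}_a,s_a,m_a)^1;(Q_b,\mathbf{p}_b,s_b,m_b)^2\rangle^C$ denotes a single-valued but order-dependent two-particle state vector. In it, $Q$ denotes the intrinsic quantum numbers (rest mass, charge, etc.), $\mathbf{p}$ the momentum, $s$ the spin, and $m$ the third component of spin in a common canonical frame. Particle ''1'' has its spin frame rotation from its base frame into the canonical frame fixed as $R_a$, and particle ''2'''s rotation is defined relative to it as $R_a R_{21}$ with $R_{21}=R_{\hat{\mathbf{k}}}(\pm\pi)$, a rotation by $\pi$ about the axis $\hat{\mathbf{k}}$ bisecting the two momenta. Under exchange of the variables $a\leftrightarrow b$,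 keeping the labels $1,2$ fixed, these vectors satisfy $$|(Q_b,\mathbf{p}_b,s_b,m_b)^1;(Q_a,\mathbf{p}_a,s_a,m_a)^2\rangle^C=(-1)^{2s_a}|(Q_a,\mathbf{p}_a,s_a,m_a)^1;(Q_b,\mathbf{p}_b,s_b,m_b)^2\rangle^C .$$ *)

From HB Require Import structures.
From mathcomp Require Import all_boot all_order all_algebra.
Set Implicit Arguments. Unset Strict Implicit. Unset Printing Implicit Defensive.
Import Order.TTheory GRing.Theory Num.Theory.
Local Open Scope ring_scope.

(* Spin s is encoded by d = 2s : nat.  The third component m ranges over
   -s, -s+1, ..., s; it is encoded by k : 'I_(d.+1), with m = k - s.
   [ket Qa pa ma Qb pb mb] is the two-particle canonical state vector
   |(Qa,pa,s,ma)^1;(Qb,pb,s,mb)^2>^C in the state space V. *)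

(* Composite state |S,M:(Qa,pa,s)^1;(Qb,pb,s)^2>^C, where
   CG ma mb = C^{ssS}_{ma mb M}. *)
Definition composite_state (K : numClosedFieldType) (V : lmodType K)
  (Q P : Type) (d : nat)
  (ket : Q -> P -> 'I_d.+1 -> Q -> P -> 'I_d.+1 -> V)
  (CG : 'I_d.+1 -> 'I_d.+1 -> K) (Qa : Q) (pa : P) (Qb : Q) (pb : P) : V :=
  \sum_(ma < d.+1) \sum_(mb < d.+1) CG ma mb *: ket Qa pa ma Qb pb mb.

From HB Require Import structures.
From mathcomp Require Import all_boot all_order all_algebra.
Import Order.TTheory GRing.Theory Num.Theory.
Local Open Scope ring_scope.

(* For identical particles, swapping the summation indices ma <-> mb maps the
   composite state to itself, while the Clebsch-Gordan symmetry and the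
   exchange rule multiply each term by (-1)^(S-2s) (-1)^(2s) = (-1)^S.  For
   odd S the state therefore equals its own opposite, so it is 0 since the
   scalars have characteristic 0. *)

Lemma lmod_eqN_eq0 (R : numFieldType) (V : lmodType R) (v : V) :
  v = - v -> v = 0.
Proof.
move=> vN; have : v *+ 2 = 0 by rewrite mulr2n {1}vN addNr.
by move/eqP; rewrite -scaler_nat scaler_eq0 pnatr_eq0 => /eqP.
Qed.

Lemma sum_antisym_eq0 (R : numFieldType) (V : lmodType R) (I : finType)
    (f : I -> I -> V) :
  (forall i j, f i j = - f j i) -> \sum_i \sum_j f i j = 0.
Proof.
move=> fN; apply: lmod_eqN_eq0; rewrite {1}exchange_big -sumrN.
by apply: eq_bigr => j _; rewrite -sumrN; apply: eq_bigr => i _; apply: fN.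
Qed.

Lemma signrz_subnK (R : unitRingType) (n m : nat) :
  (-1 : R) ^ (n%:Z - m%:Z) * (-1) ^+ m = (-1) ^+ n.
Proof.
have -> : (-1 : R) ^+ m = (-1) ^ m%:Z by [].
by rewrite -exprzDr ?unitrN1 // subrK.
Qed.

Theorem mainTheorem2 (K : numClosedFieldType) (V : lmodType K)
  (Q P : Type) (d : nat)
  (ket : Q -> P -> 'I_d.+1 -> Q -> P -> 'I_d.+1 -> V)
  (CG : nat -> int -> 'I_d.+1 -> 'I_d.+1 -> K)
  (Hexch : forall (Qa : Q) (pa : P) (ma : 'I_d.+1) (Qb : Q) (pb : P) (mb : 'I_d.+1),
      ket Qb pb mb Qa pa ma = (-1) ^+ d *: ket Qa pa ma Qb pb mb)
  (HCG : forall (S : nat) (M : int) (ma mb : 'I_d.+1),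
      CG S M ma mb = (-1) ^ (S%:Z - d%:Z) * CG S M mb ma)
  (S : nat) (M : int) (Qa Qb : Q) (pa pb : P) :
  pa = pb -> Qa = Qb -> odd S ->
  composite_state ket (CG S M) Qa pa Qb pb = 0.
Proof.
move=> <- <- oddS; apply: sum_antisym_eq0 => ma mb.
rewrite HCG Hexch scalerA mulrAC signrz_subnK -signr_odd oddS.
by rewrite mulN1r scaleNr.
Qed.
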